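(* Let $n$ be even and let $G=D_n$ be the dihedral group of order $2n$. Let $H\le G$ be a subgroup isomorphic to a dihedral group, of index $2$ in $G$, and whose order is divisible by $4$. Then the restriction map $\operatorname{Res}:H^3(G,\mathbb{Z})\to H^3(H,\mathbb{Z})$ is injective.
   Context: $D_n=\langle r,s\mid r^n=s^2=e,\ srs=r^{-1}\rangle$. $\mathbb{Z}$ is the trivial $G$-module. *)

From mathcomp Require Import all_boot all_order all_algebra all_fingroup all_solvable.
Set Implicit Arguments. Unset Strict Implicit. Unset Printing Implicit Defensive.
Import GRing.Theory.

(* Group cohomology H^3(G, Z) of a finite group G with trivial coefficients Z,
   via the standard (inhomogeneous) cochain complex: n-cochains are functions
   G^n -> Z (represented as functions on the ambient finGroupType, only their
   values on G mattering). *)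

Definition cochain2 (gT : finGroupType) := gT -> gT -> int.
Definition cochain3 (gT : finGroupType) := gT -> gT -> gT -> int.

Definition d2 (gT : finGroupType) (c : cochain2 gT) : cochain3 gT :=
  fun g1 g2 g3 =>
    (c g2 g3 - c (g1 * g2)%g g3 + c g1 (g2 * g3)%g - c g1 g2)%R.

Definition d3 (gT : finGroupType) (f : cochain3 gT) (g1 g2 g3 g4 : gT) : int :=
  (f g2 g3 g4 - f (g1 * g2)%g g3 g4 + f g1 (g2 * g3)%g g4
   - f g1 g2 (g3 * g4)%g + f g1 g2 g3)%R.

Definition cocycle3 (gT : finGroupType) (G : {set gT}) (f : cochain3 gT) : Prop :=
  forall g1 g2 g3 g4, g1 \in G -> g2 \in G -> g3 \in G -> g4 \in G ->
    d3 f g1 g2 g3 g4 = 0%R.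

Definition coboundary3 (gT : finGroupType) (G : {set gT}) (f : cochain3 gT) : Prop :=
  exists c : cochain2 gT, forall g1 g2 g3, g1 \in G -> g2 \in G -> g3 \in G ->
    f g1 g2 g3 = d2 c g1 g2 g3.

(* Res : H^3(G,Z) = Z^3/B^3 -> H^3(H,Z) sends the class of a cocycle f on G to
   the class of its restriction to H^3.  Injectivity of this map between the
   quotient groups unfolds to: every 3-cocycle of G whose restriction to H is a
   coboundary on H is already a coboundary on G. *)
Definition res3_injective (gT : finGroupType) (G H : {set gT}) : Prop :=
  forall f : cochain3 gT, cocycle3 G f -> coboundary3 H f -> coboundary3 G f.

Definition is_dihedral (gT : finGroupType) (H : {set gT}) : Prop :=
  exists2 m : nat, (1 < m)%N & H \isog [set: 'D_(m.*2)].

From mathcomp Require Import all_boot all_order all_algebra all_fingroup all_solvable.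
From mathcomp Require Import ring lra zify.

(* Averaging a 3-cocycle f of G over its last argument gives a rational
   2-cochain al with d al = f, so f is an integral coboundary as soon as al
   is a coboundary modulo Z (this is H^3(G, Z) = H^2(G, Q/Z)).  If f restricts
   to a coboundary d c on H, then al - c is a rational 2-cocycle of H, hence
   symmetric on commuting pairs (average again): al(y, z) = al(z, y) mod Z for
   a reflection y of H and the central half-turn z = x^(n/2), which lies in H
   because 4 divides |H| and H contains all squares.
   For G = D_n with n even, this symmetry is the only obstruction for a
   Q/Z-valued 2-cocycle w: trivialising w along the rotations x^i with an
   increment t per step and extending to the reflections x^i y leaves the
   single value psi(y, x) to kill; the symmetry gives n/2 * psi(y, x) in Z,
   and psi(y, x) depends affinely on t with slope n - 2, so a suitable t makes
   it integral. *)
Set Implicit Arguments. Unset Strict Implicit. Unset Printing Implicit Defensive.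
Import GRing.Theory Num.Theory.

Section DihedralGenerators.
Local Open Scope group_scope.
Variables (gT : finGroupType) (q : nat) (x y : gT).
Hypotheses (q_gt1 : (1 < q)%N) (defG : <[x]> <*> <[y]> = [set: gT]).
Hypotheses (xq : x ^+ q = 1) (y2 : y ^+ 2 = 1) (xy : x ^ y = x^-1).
Hypothesis oG : #|[set: gT]| = q.*2.

Let yy : y * y = 1. Proof. by rewrite -y2 expgS expg1. Qed.

Let y_invert r : r \in <[x]> -> y * r = r^-1 * y.
Proof.
case/cycleP=> i ->; have yV : y^-1 = y by apply/eqP; rewrite eq_invg_mul yy.
have : (x ^+ i) ^ y = (x ^+ i)^-1 by rewrite conjXg xy expgVn.
by rewrite conjgE yV => <-; rewrite !mulgA -[RHS]mulgA yy mulg1.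
Qed.

Lemma dihedral_mulgen : <[x]> * <[y]> = [set: gT].
Proof. by rewrite -norm_joinEr // norms_cycle xy groupV cycle_id. Qed.

Lemma dihedral_orders : #[x] = q /\ #[y] = 2.
Proof.
have le_q2 : (q.*2 <= #[x] * #[y])%N.
  by rewrite -oG -dihedral_mulgen !orderE mul_cardG leq_pmulr ?cardG_gt0.
have /(dvdn_leq (ltnW q_gt1)) : #[x] %| q by rewrite order_dvdn xq.
have /(dvdn_leq (isT : (0 < 2)%N)) : #[y] %| 2 by rewrite order_dvdn y2.
by move: le_q2; nia.
Qed.

Lemma dihedral_reflP g : g \notin <[x]> -> exists2 r, r \in <[x]> & g = r * y.
Proof.
have : g \in <[x]> * <[y]> by rewrite dihedral_mulgen inE.
case/mulsgP=> r b rx; rewrite cycle2g ?(proj2 dihedral_orders) // !inE.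
by case/orP=> /eqP-> ->; [rewrite mulg1 rx | exists r].
Qed.

Lemma dihedral_refl_invert g r : g \notin <[x]> -> r \in <[x]> -> g * r = r^-1 * g.
Proof.
case/dihedral_reflP=> s sx -> rx; rewrite -mulgA y_invert // !mulgA.
by rewrite (centsP (cycle_abelian x) s) ?groupV.
Qed.

Lemma dihedral_refl_involution g : g \notin <[x]> -> g * g = 1.
Proof.
move=> gNx; have [s sx gE] := dihedral_reflP gNx.
by rewrite {2}gE mulgA (dihedral_refl_invert gNx sx) gE mulKg yy.
Qed.

Lemma dihedral_refl_mul g h : g \notin <[x]> -> h \notin <[x]> -> g * h \in <[x]>.
Proof.
move=> gNx /dihedral_reflP[r rx ->]; rewrite mulgA (dihedral_refl_invert gNx rx) -mulgA.
by have [s sx ->] := dihedral_reflP gNx; rewrite -mulgA yy mulg1 groupM ?groupV.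
Qed.

Lemma dihedral_not_cyclic : ~~ cyclic [set: gT].
Proof.
apply/negP=> /cyclicP[g defGg].
have og : #[g] = q.*2 by rewrite orderE -defGg oG.
have [gx | gNx] := boolP (g \in <[x]>).
  have : <[g]> \subset <[x]> by rewrite cycle_subG.
  move/cardSg; rewrite -!orderE og (proj1 dihedral_orders).
  by move/(dvdn_leq (ltnW q_gt1)); lia.
have : #[g] %| 2 by rewrite order_dvdn expgS expg1 dihedral_refl_involution.
by rewrite og => /(dvdn_leq (isT : (0 < 2)%N)); lia.
Qed.

End DihedralGenerators.

Lemma mulgg_index2 (gT : finGroupType) (G H : {group gT}) g :
  H \subset G -> #|G : H|%g = 2 -> g \in G -> (g * g \in H)%g.
Proof.
move=> sHG iGH gG; have [gH | gNH] := boolP (g \in H); first exact: groupM.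
apply/negPn/negP=> ggNH.
have gGH : g \in G :\: H by rewrite inE gNH.
have : (g * g)%g \in (H :* g)%g by rewrite (rcoset_index2 sHG iGH gGH) inE ggNH groupM.
by case/rcosetP=> h hH /mulIg gE; rewrite gE hH in gNH.
Qed.

Section Cochains.
Variable gT : finGroupType.
Local Open Scope ring_scope.

Definition delta1 (R : zmodType) (g : gT -> R) (a b : gT) : R :=
  g b - g (a * b)%g + g a.

Definition delta2 (R : zmodType) (c : gT -> gT -> R) (a b c' : gT) : R :=
  c b c' - c (a * b)%g c' + c a (b * c')%g - c a b.

Lemma intr_d2 (R : pzRingType) (c : cochain2 gT) a b c' :
  (d2 c a b c')%:~R = delta2 (fun a b => (c a b)%:~R : R) a b c'.
Proof. by rewrite /d2 /delta2 !(rmorphD, rmorphN). Qed.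

Lemma delta2_subr_delta1 (R : comPzRingType) (c : gT -> gT -> R) g a b c' :
  delta2 (fun a b => c a b - delta1 g a b) a b c' = delta2 c a b c'.
Proof. by rewrite /delta2 /delta1 mulgA; ring. Qed.

Lemma sum_mulgl (R : nmodType) (G : {group gT}) (F : gT -> R) b : b \in G ->
  \sum_(v in G) F (b * v)%g = \sum_(v in G) F v.
Proof.
move=> bG; rewrite (reindex_inj (mulgI b^-1%g)) /=.
by apply: eq_big => [v | v _]; rewrite ?groupMl ?groupV ?mulKVg.
Qed.

Definition mean3 (R : numFieldType) (G : {set gT}) (f : cochain3 gT) (a b : gT) : R :=
  #|G|%:R^-1 * \sum_(v in G) (f a b v)%:~R.

Lemma delta2_mean3 (R : numFieldType) (G : {group gT}) (f : cochain3 gT) a b c :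
  cocycle3 G f -> a \in G -> b \in G -> c \in G ->
  delta2 (mean3 R G f) a b c = - (f a b c)%:~R.
Proof.
move=> fG aG bG cG; have G0 : #|G|%:R != 0 :> R by rewrite pnatr_eq0 -lt0n cardG_gt0.
have d3_sum : \sum_(v in G) (d3 f a b c v)%:~R = 0 :> R.
  by rewrite big1 // => v vG; rewrite fG.
move: d3_sum; rewrite /d3; under eq_bigr do rewrite !(rmorphD, rmorphN).
rewrite !(big_split, sumrN) /= (sum_mulgl (fun v => (f a b v)%:~R)) // sumr_const -mulr_natl.
rewrite /delta2 /mean3 -mulrBr -mulrDr -mulrBr => /eqP; rewrite addr_eq0 => /eqP->.
by rewrite mulrN mulKf.
Qed.

Lemma cocycle2_comm (R : numFieldType) (G : {group gT}) (c : gT -> gT -> R) :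
    (forall a b c', a \in G -> b \in G -> c' \in G -> delta2 c a b c' = 0) ->
  forall a b, a \in G -> b \in G -> commute a b -> c a b = c b a.
Proof.
move=> cG; have G0 : #|G|%:R != 0 :> R by rewrite pnatr_eq0 -lt0n cardG_gt0.
pose C a := \sum_(v in G) c a v.
have mean a b : a \in G -> b \in G -> #|G|%:R * c a b = delta1 C a b.
  move=> aG bG; have : \sum_(v in G) delta2 c a b v = 0.
    by rewrite big1 // => v vG; rewrite cG.
  rewrite /delta2 !(big_split, sumrN) /= (sum_mulgl (c a)) // sumr_const.
  by move/eqP; rewrite subr_eq0 mulr_natl => /eqP <-.
move=> a b aG bG ab; apply: (mulfI G0); rewrite !mean // /delta1 ab; ring.
Qed.

End Cochains.

(* [int_from H] reduces an integrality goal to an identity between the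
   integral expression of [H] and the one of the goal. *)
Tactic Notation "int_from" constr(H) :=
  apply: (eq_ind _ (fun r => r \is a Num.int) H).
Tactic Notation "int_from" := let H := fresh in move=> H; int_from H; clear H.

Section DihedralCocycle.
Local Open Scope ring_scope.
Variables (R : archiFieldType) (gT : finGroupType) (x y : gT) (k : nat).
Local Notation n := k.*2.
Hypotheses (k_gt0 : (0 < k)%N) (ox : #[x]%g = n) (yy : (y * y = 1)%g).
Hypothesis y_invert : forall r, r \in <[x]>%g -> (y * r = r^-1 * y)%g.
Hypothesis ynx : y \notin <[x]>%g.
Hypothesis refl_mul : forall g, g \notin <[x]>%g -> (g * y)%g \in <[x]>%g.
Variable w : gT -> gT -> R.
Hypothesis w_cocycle : forall a b c, delta2 w a b c \is a Num.int.
Hypothesis w_comm : w y (x ^+ k)%g - w (x ^+ k)%g y \is a Num.int.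

Let n_gt0 : (0 < n)%N. Proof. by rewrite double_gt0. Qed.

Lemma dihedral_ind (P : gT -> Prop) :
    (forall r, r \in <[x]>%g -> P r) -> (forall r, r \in <[x]>%g -> P (r * y)%g) ->
  forall g, P g.
Proof.
move=> Pr Pry g; have [gx | gNx] := boolP (g \in <[x]>%g); first exact: Pr.
by rewrite -[g]mulg1 -yy mulgA; apply/Pry/refl_mul.
Qed.

Lemma commute_half_turn : commute y (x ^+ k).
Proof.
rewrite /commute y_invert ?mem_cycle //; congr (_ * _)%g; apply/eqP.
by rewrite eq_invg_mul -expgD addnn -ox expg_order.
Qed.

Definition cycle_exponent (g : gT) : nat := find (fun i => (x ^+ i)%g == g) (iota 0 n).

Lemma cycle_exponentE i : (i < n)%N -> cycle_exponent (x ^+ i)%g = i.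
Proof.
move=> lt_in; have has_i : has (fun j => (x ^+ j)%g == (x ^+ i)%g) (iota 0 n).
  by apply/hasP; exists i; rewrite ?mem_iota.
have := nth_find 0%N has_i; have := has_i; rewrite has_find size_iota => lt_f.
by rewrite nth_iota // add0n eq_expg_mod_order ox !modn_small // => /eqP.
Qed.

Lemma cycle_expP r : r \in <[x]>%g -> exists2 i, (i < n)%N & r = (x ^+ i)%g.
Proof.
case/cycleP=> j ->; exists (j %% n)%N; first by rewrite ltn_pmod.
by rewrite -ox expg_mod_order.
Qed.

Definition gamma_cycle t i := w 1%g 1%g + i%:R * t - \sum_(j < i) w x (x ^+ j)%g.

Lemma gamma_cycleS t i : gamma_cycle t i.+1 = gamma_cycle t i + t - w x (x ^+ i)%g.
Proof. by rewrite /gamma_cycle big_ord_recr mulrSr /=; ring. Qed.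

Lemma gamma_cycle0 t : gamma_cycle t 0 = w 1%g 1%g.
Proof. by rewrite /gamma_cycle big_ord0 mul0r; ring. Qed.

Lemma gamma_cycle_lin t i : gamma_cycle t i = gamma_cycle 0 i + i%:R * t.
Proof. by rewrite /gamma_cycle mulr0; ring. Qed.

(* On reflections the constant is chosen to make [psi t y y] integral. *)
Definition gamma t g :=
  if g \in <[x]>%g then gamma_cycle t (cycle_exponent g)
  else gamma_cycle t (cycle_exponent (g * y)%g) + (w y y + w 1%g 1%g) / 2%:R - w (g * y)%g y.

Definition psi t a b := w a b - delta1 (gamma t) a b.

Lemma gamma_exp t i : (i < n)%N -> gamma t (x ^+ i)%g = gamma_cycle t i.
Proof. by move=> lt_in; rewrite /gamma mem_cycle cycle_exponentE. Qed.

Lemma gamma1 t : gamma t 1%g = w 1%g 1%g.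
Proof. by rewrite -(expg0 x) gamma_exp // gamma_cycle0. Qed.

Lemma gamma_refl t r : r \in <[x]>%g ->
  gamma t (r * y)%g = gamma t r + (w y y + w 1%g 1%g) / 2%:R - w r y.
Proof. by move=> rx; rewrite /gamma groupMl // (negbTE ynx) rx -mulgA yy mulg1. Qed.

Lemma gamma_y t : gamma t y = w 1%g 1%g + (w y y + w 1%g 1%g) / 2%:R - w 1%g y.
Proof. by rewrite -{1}[y]mul1g gamma_refl ?group1 // gamma1. Qed.

Lemma psi_cocycle t a b c : delta2 (psi t) a b c \is a Num.int.
Proof. by rewrite delta2_subr_delta1. Qed.

Lemma w_1l c : w 1%g c - w 1%g 1%g \is a Num.int.
Proof. by int_from (w_cocycle 1 1 c); rewrite /delta2 !mul1g; ring. Qed.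

Lemma w_1r g : w g 1%g - w 1%g 1%g \is a Num.int.
Proof. by int_from (rpredNr (w_cocycle g 1 1)); rewrite /delta2 !mulg1; ring. Qed.

Lemma gamma_x t : gamma t x = w 1%g 1%g + t - w x 1%g.
Proof.
have n_gt1 : (1 < n)%N by rewrite -addnn; case: k k_gt0 => // ? _; rewrite addSn ltnS addnS.
by rewrite -{1}(expg1 x) gamma_exp // gamma_cycleS gamma_cycle0 expg0.
Qed.

Lemma psi_mul_refl t r : r \in <[x]>%g -> psi t r y = psi t 1%g y.
Proof.
by move=> rx; rewrite /psi /delta1 mul1g gamma_refl // gamma_y gamma1; ring.
Qed.

Lemma psi_1 t c : psi t 1%g c \is a Num.int.
Proof. by rewrite /psi /delta1 mul1g gamma1; int_from (w_1l c); ring. Qed.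

Lemma psi_y_1 t : psi t y 1%g \is a Num.int.
Proof. by rewrite /psi /delta1 mulg1 gamma1; int_from (w_1r y); ring. Qed.

Lemma psi_y_y t : psi t y y \is a Num.int.
Proof.
rewrite /psi /delta1 yy gamma1 gamma_y.
by int_from (rpredD (w_1l y) (w_1l y)); field.
Qed.

Section ClosedCycle.
Variable t : R.
(* The increments of [gamma_cycle t] add up to an integer around x ^+ n = 1. *)
Hypothesis t_closed : gamma_cycle t n - gamma_cycle t 0 \is a Num.int.

Lemma psi_x_exp i : (i < n)%N -> psi t x (x ^+ i)%g \is a Num.int.
Proof.
move=> lt_in; rewrite /psi /delta1 -expgS gamma_exp // gamma_x.
have [lt_i1n | ge_i1n] := ltnP i.+1 n.
  by rewrite gamma_exp // gamma_cycleS; int_from (w_1r x); ring.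
have i1n : i.+1 = n by apply/eqP; rewrite eqn_leq lt_in.
rewrite i1n -ox expg_order gamma1; move: t_closed; rewrite -i1n gamma_cycleS gamma_cycle0.
by move/(rpredB (w_1r x)); int_from; ring.
Qed.

Lemma psi_x g : psi t x g \is a Num.int.
Proof.
elim/dihedral_ind: g => r rx; have [i lt_in ->] := cycle_expP rx.
  exact: psi_x_exp.
int_from (rpredD (psi_cocycle t x (x ^+ i) y) (psi_x_exp lt_in)).
by rewrite /delta2 !psi_mul_refl ?groupM ?mem_cycle ?cycle_id //; ring.
Qed.

Lemma psi_cycle r c : r \in <[x]>%g -> psi t r c \is a Num.int.
Proof.
case/cycleP=> i ->{r}; elim: i c => [|i IHi] c; first by rewrite expg0 psi_1.
have := psi_cocycle t x (x ^+ i) c.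
move/(rpredB (rpredD (IHi c) (psi_x (x ^+ i * c))))/rpredB/(_ (psi_x (x ^+ i))).
by int_from; rewrite /delta2 -expgS; ring.
Qed.

Lemma psi_y_cycle_mul r c : r \in <[x]>%g ->
  psi t y (r * c)%g - psi t y c - psi t y r \is a Num.int.
Proof.
move=> rx; have r'x : r^-1%g \in <[x]>%g by rewrite groupV.
have := rpredB (psi_cocycle t y r c) (psi_cocycle t r^-1 y c).
move/rpredB/(_ (psi_cycle c rx))/rpredD/(_ (psi_cycle (y * c) r'x)).
move/rpredB/(_ (psi_cycle y r'x)).
by int_from; rewrite /delta2 y_invert //; ring.
Qed.

Lemma psi_y_exp i : psi t y (x ^+ i)%g - i%:R * psi t y x \is a Num.int.
Proof.
elim: i => [|i IHi]; first by rewrite expg0 mul0r subr0 psi_y_1.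
have := rpredD IHi (psi_y_cycle_mul (x ^+ i) (cycle_id x)).
by int_from; rewrite expgS mulrSr; ring.
Qed.

Lemma psi_y_x_half : k%:R * psi t y x \is a Num.int.
Proof.
have psi_yz : psi t y (x ^+ k)%g \is a Num.int.
  have := rpredD w_comm (psi_cycle y (mem_cycle x k)).
  by int_from; rewrite /psi /delta1 commute_half_turn; ring.
by have := rpredB psi_yz (psi_y_exp k); int_from; ring.
Qed.

Lemma psi_int_of_y_x : psi t y x \is a Num.int -> forall a c, psi t a c \is a Num.int.
Proof.
move=> psi_yx; have psi_y c : psi t y c \is a Num.int.
  elim/dihedral_ind: c => r rx; have [i _ ->] := cycle_expP rx.
    by have := rpredD (psi_y_exp i) (rpredM (natr_int R i) psi_yx); rewrite subrK.
  have := rpredD (psi_y_cycle_mul y (mem_cycle x i)) (psi_y_y t).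
  move/rpredD/(_ (psi_y_exp i))/rpredD/(_ (rpredM (natr_int R i) psi_yx)).
  by int_from; ring.
move=> a c; elim/dihedral_ind: a => r rx; first exact: psi_cycle.
have := rpredB (psi_y c) (psi_cocycle t r y c).
move/rpredD/(_ (psi_cycle (y * c) rx))/rpredB/(_ (psi_cycle y rx)).
by int_from; rewrite /delta2; ring.
Qed.

End ClosedCycle.

Lemma psi_y_x_lin t : psi t y x = psi 0 y x + (n%:R - 2%:R) * t.
Proof.
have lt_n1n : (n.-1 < n)%N by rewrite prednK.
rewrite /psi /delta1 y_invert ?cycle_id // invg_expg ox.
rewrite !gamma_refl ?mem_cycle // !gamma_exp // !gamma_x.
rewrite (gamma_cycle_lin t) -subn1 natrB; last by rewrite double_gt0.
by rewrite !gamma_y; ring.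
Qed.

Theorem dihedral_cocycle_coboundary :
  exists g : gT -> R, forall a b, w a b - delta1 g a b \is a Num.int.
Proof.
(* [t0] closes the cycle; shifting it by c0 / 2 keeps it closed and turns
   [psi _ y x] into k * c0, using psi_y_x_lin. *)
have n0 : n%:R != 0 :> R by rewrite pnatr_eq0 -lt0n.
have nE : n%:R = 2%:R * k%:R :> R by rewrite -mul2n natrM.
pose t0 := (gamma_cycle 0 0 - gamma_cycle 0 n) / n%:R.
have closed d : n%:R * d \is a Num.int ->
    gamma_cycle (t0 + d) n - gamma_cycle (t0 + d) 0 \is a Num.int.
  by int_from; rewrite !(gamma_cycle_lin (t0 + d)) /t0; field.
have := closed 0; rewrite mulr0 rpred0 addr0 => /(_ isT) closed0.
pose c0 := psi t0 y x; have half_c0 : k%:R * c0 \is a Num.int := psi_y_x_half closed0.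
exists (gamma (t0 + c0 / 2%:R)); apply: psi_int_of_y_x.
  by apply: closed; int_from half_c0; rewrite nE; field.
have -> : psi (t0 + c0 / 2%:R) y x = k%:R * c0.
  by rewrite psi_y_x_lin /c0 (psi_y_x_lin t0) nE; field.
exact: half_c0.
Qed.

End DihedralCocycle.

Lemma dihedral_group_not_cyclic m : (1 < m)%N -> ~~ cyclic [set: 'D_(m.*2)].
Proof.
move=> m_gt1; have /existsP[[x y] /= /eqP[defG xm y2 xy]] := isoGrp_hom (Grp_dihedral m_gt1).
exact: dihedral_not_cyclic m_gt1 defG xm y2 xy (card_dihedral m_gt1).
Qed.

Section Restriction.
Local Open Scope ring_scope.

Lemma res3_injective_dihedral (gT : finGroupType) (H : {group gT}) (x y : gT) k :
    (0 < k)%N -> #[x]%g = k.*2 -> (y * y = 1)%g ->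
    (forall r, r \in <[x]>%g -> (y * r = r^-1 * y)%g) -> y \notin <[x]>%g ->
    (forall g, g \notin <[x]>%g -> (g * y)%g \in <[x]>%g) ->
  y \in H -> (x ^+ k)%g \in H -> res3_injective [set: gT] H.
Proof.
move=> k_gt0 ox yy y_invert ynx refl_mul yH zH f f_cocycle [c fE].
pose al a b : rat := - mean3 rat [set: gT]%G f a b.
have al_delta2 a b c' : delta2 al a b c' = (f a b c')%:~R.
  have := delta2_mean3 rat f_cocycle (in_setT a) (in_setT b) (in_setT c').
  by rewrite /delta2 /al => e; rewrite -[RHS]opprK -e; ring.
have al_comm : al y (x ^+ k)%g - al (x ^+ k)%g y \is a Num.int.
  pose be a b := al a b - (c a b)%:~R.
  have be_cocycle a b c' : a \in H -> b \in H -> c' \in H -> delta2 be a b c' = 0.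
    move=> aH bH cH; have := al_delta2 a b c'; rewrite fE // intr_d2.
    by rewrite /delta2 /be => e; lra.
  have := cocycle2_comm be_cocycle yH zH (commute_half_turn ox y_invert).
  rewrite /be => be_comm; rewrite (_ : _ - _ = (c y (x ^+ k)%g)%:~R - (c (x ^+ k)%g y)%:~R).
    by rewrite rpredB ?intr_int.
  by lra.
have al_cocycle a b c' : delta2 al a b c' \is a Num.int by rewrite al_delta2 intr_int.
have [g gE] := dihedral_cocycle_coboundary k_gt0 ox yy y_invert ynx refl_mul al_cocycle al_comm.
exists (fun a b => Num.floor (al a b - delta1 g a b)) => a b c' _ _ _.
apply: (@intr_inj rat); rewrite intr_d2 -al_delta2 -(delta2_subr_delta1 al g).
by rewrite /delta2 !floorK ?gE.
Qed.

End Restriction.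

Theorem lemma2p2 (n : nat) (n_gt0 : (0 < n)%N) (n_even : ~~ odd n)
    (H : {group 'D_(n.*2)}) :
  is_dihedral H ->
  (#|[set: 'D_(n.*2)] : H|)%g = 2 ->
  (4 %| #|H|)%N ->
  res3_injective [set: 'D_(n.*2)] H.
Proof.
move=> [m m_gt1 isoH] iGH H4.
have n_gt1 : (1 < n)%N by rewrite ltn_neqAle n_gt0 andbT; apply: contraNneq n_even => <-.
have /existsP[[x y] /= /eqP[defG xn y2 xy]] := isoGrp_hom (Grp_dihedral n_gt1).
have oG := card_dihedral n_gt1.
have [ox _] := dihedral_orders n_gt1 defG xn y2 xy oG.
have oH : #|H| = n by have := Lagrange (subsetT H); rewrite iGH oG muln2 => /double_inj.
have [r rH rNx] : exists2 r, r \in H & r \notin <[x]>%g.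
  apply/subsetPn; apply: contraL (dihedral_group_not_cyclic m_gt1) => sHx.
  by rewrite -(isog_cyclic isoH) (cyclicS sHx) ?cycle_cyclic.
pose k := n./2; have nE : n = k.*2 by rewrite -[n in LHS]even_halfK.
have k_even : ~~ odd k.
  by move: H4; rewrite oH nE -mul2n -[4]/(2 * 2)%N dvdn_pmul2l // dvdn2.
have xkH : (x ^+ k)%g \in H.
  have -> : (x ^+ k = x ^+ k./2 * x ^+ k./2)%g by rewrite -expgD addnn even_halfK.
  by rewrite (mulgg_index2 (subsetT H) iGH) ?inE.
apply: (res3_injective_dihedral (k := k)) rH xkH.
- by rewrite lt0n; apply: contraTneq n_gt0 => k0; rewrite nE k0.
- by rewrite ox.
- exact: dihedral_refl_involution n_gt1 defG xn y2 xy oG _ rNx.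
- by move=> s; apply: dihedral_refl_invert n_gt1 defG xn y2 xy oG _ _ rNx.
- exact: rNx.
- by move=> g gNx; apply: dihedral_refl_mul n_gt1 defG xn y2 xy oG _ _ gNx rNx.
Qed.
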